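(* Let $(G,\precsim)$ be a compatible quasi-ordered abelian group. For every $g\in G$: $g$ is v-type $\Leftrightarrow$ $g\sim-g$ $\Leftrightarrow$ ($0\precsim g$ and $0\precsim -g$). Equivalently: $g$ is o-type $\Leftrightarrow$ ($g\not\sim-g$ or $g=0$) $\Leftrightarrow$ ($g\precsim0$ or $-g\precsim0$).
   Context: A compatible quasi-ordered abelian group is an abelian group $G$ with a total quasi-order $\precsim$ (reflexive, transitive, any two elements comparable) such that, writing $a\sim b$ for $a\precsim b\wedge b\precsim a$: $(Q_1)$ $x\sim0\Rightarrow x=0$; $(Q_2)$ $x\precsim y\wedge y\not\sim z\Rightarrow x+z\precsim y+z$, for all $x,y,z$. Let $cl(g)$ be the $\sim$-class of $g$. An element $g$ is o-type if $cl(g)=\{g\}$ and $g$ is not of order $2$; $g$ is v-type if $\{g\}\subsetneq cl(g)$ or $2g=0$ (so $0$ is both o-type and v-type). *)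

From mathcomp Require Import all_boot all_algebra.
Set Implicit Arguments. Unset Strict Implicit. Unset Printing Implicit Defensive.
Import GRing.Theory.
Local Open Scope ring_scope.

Definition qsim (G : zmodType) (le : G -> G -> Prop) (a b : G) : Prop :=
  le a b /\ le b a.

(* Compatible quasi-ordered abelian group: total quasi-order with Q1, Q2. *)
Definition compatible_qo (G : zmodType) (le : G -> G -> Prop) : Prop :=
  [/\ (forall x, le x x),
      (forall x y z, le x y -> le y z -> le x z),
      (forall x y, le x y \/ le y x),
      (forall x, qsim le x 0 -> x = 0)
    & (forall x y z, le x y -> ~ qsim le y z -> le (x + z) (y + z))].

Definition cl (G : zmodType) (le : G -> G -> Prop) (g : G) : G -> Prop :=
  fun h => qsim le h g.

Definition order2 (G : zmodType) (g : G) : Prop := g != 0 /\ g + g = 0.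

Definition o_type (G : zmodType) (le : G -> G -> Prop) (g : G) : Prop :=
  (forall h, cl le g h <-> h = g) /\ ~ order2 g.

Definition v_type (G : zmodType) (le : G -> G -> Prop) (g : G) : Prop :=
  (* {g} is a proper subset of cl(g) (g \in cl(g) by reflexivity), or 2g = 0 *)
  (exists h, cl le g h /\ h <> g) \/ g + g = 0.

From mathcomp Require Import all_boot all_algebra.
From Stdlib Require Import Classical.
Local Open Scope ring_scope.
Import GRing.Theory.

(* Everything rests on Q2 with z = -g: when g is not equivalent to -g, a
   comparison x <~ g or g <~ x can be translated by -g into a comparison with 0.
   This forces 0 <~ g and 0 <~ -g when g ~ -g; conversely these two inequalities
   with g not~ -g give -g ~ 0, i.e. g = 0; and it makes cl(g) = {g} whenever
   g not~ -g. *)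

Lemma addrr_eq0_oppr (G : zmodType) (g : G) : g + g = 0 <-> - g = g.
Proof.
by split=> [/eqP|opp_g]; [rewrite addr_eq0 eq_sym => /eqP | apply/eqP; rewrite addr_eq0 opp_g].
Qed.

Section CompatibleQuasiOrder.

Variables (G : zmodType) (le : G -> G -> Prop).
Hypothesis Hc : compatible_qo le.

Local Notation "x <~ y" := (le x y) (at level 70).
Local Notation "x ~ y" := (qsim le x y) (at level 70).

Let le_refl : forall x, x <~ x. Proof. by case: Hc. Qed.
Let le_trans : forall {x y z}, x <~ y -> y <~ z -> x <~ z. Proof. by case: Hc. Qed.
Let le_total : forall x y, x <~ y \/ y <~ x. Proof. by case: Hc. Qed.
Let sim0_eq0 : forall {x}, x ~ 0 -> x = 0. Proof. by case: Hc. Qed.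
Let le_addr : forall {x y z}, x <~ y -> ~ y ~ z -> x + z <~ y + z.
Proof. by case: Hc. Qed.

Lemma qsim_refl (x : G) : x ~ x.
Proof. by split; apply: le_refl. Qed.

Lemma qsim_sym {x y : G} : x ~ y -> y ~ x.
Proof. by case. Qed.

Lemma qsim_trans {x y z : G} : x ~ y -> y ~ z -> x ~ z.
Proof. by move=> [xy yx] [yz zy]; split; [apply: le_trans yz | apply: le_trans yx]. Qed.

Lemma subr_sim0_eq {x y : G} : x - y ~ 0 -> x = y.
Proof. by move/sim0_eq0/eqP; rewrite subr_eq0 => /eqP. Qed.

Lemma oppr_sim0_eq0 {x : G} : - x ~ 0 -> x = 0.
Proof. by move/sim0_eq0/eqP; rewrite oppr_eq0 => /eqP. Qed.

Lemma ge0_of_sim_opp (g : G) : g ~ - g -> 0 <~ g.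
Proof.
move=> [_ opp_le_g].
have [//|g_le0] := le_total 0 g.
have [[z_le_opp _]|z_nsim_opp] := classic (0 ~ - g); first exact: le_trans opp_le_g.
have := le_addr g_le0 z_nsim_opp; rewrite subrr add0r => z_le_opp.
exact: le_trans opp_le_g.
Qed.

Lemma sim_opp_ge0 (g : G) : g ~ - g -> 0 <~ g /\ 0 <~ - g.
Proof.
move=> sim; split; first exact: ge0_of_sim_opp.
by apply: ge0_of_sim_opp; rewrite opprK; apply: qsim_sym.
Qed.

Lemma eq0_of_ge0_not_sim_opp (g : G) : 0 <~ g -> 0 <~ - g -> ~ g ~ - g -> g = 0.
Proof.
move=> z_le_g z_le_opp nsim.
have := le_addr z_le_g nsim; rewrite add0r subrr => opp_le0.
exact: oppr_sim0_eq0.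
Qed.

Lemma sim_oppE (g : G) : g ~ - g <-> 0 <~ g /\ 0 <~ - g.
Proof.
split=> [|[z_le_g z_le_opp]]; first exact: sim_opp_ge0.
have [//|nsim] := classic (g ~ - g).
by rewrite (eq0_of_ge0_not_sim_opp _ z_le_g z_le_opp nsim) oppr0; apply: qsim_refl.
Qed.

Lemma not_sim_opp_class (g h : G) : ~ g ~ - g -> h ~ g -> h = g.
Proof.
move=> nsim [h_le_g g_le_h].
have nsim_h : ~ h ~ - g by move=> sim; apply: nsim; apply: qsim_trans sim; split.
have := le_addr h_le_g nsim; rewrite subrr => hg_le0.
have := le_addr g_le_h nsim_h; rewrite subrr => z_le_hg.
exact: subr_sim0_eq.
Qed.

Lemma not_sim_oppE (g : G) : ~ g ~ - g \/ g = 0 <-> g <~ 0 \/ - g <~ 0.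
Proof.
split=> [[nsim|->]|le0].
- have [z_le_g|] := le_total 0 g; last by left.
  have [z_le_opp|] := le_total 0 (- g); last by right.
  by case: nsim; apply/sim_oppE.
- by left; apply: le_refl.
- have [/sim_oppE [z_le_g z_le_opp]|] := classic (g ~ - g); last by left.
  right; case: le0 => [g_le0|opp_le0]; first exact: sim0_eq0.
  exact: oppr_sim0_eq0.
Qed.

Lemma v_typeE (g : G) : v_type le g <-> g ~ - g.
Proof.
split=> [[[h [hg neq_hg]]|/addrr_eq0_oppr ->]|sim].
- by have [//|nsim] := classic (g ~ - g); case: neq_hg; apply: not_sim_opp_class hg.
- exact: qsim_refl.
- have [/addrr_eq0_oppr|neq] := classic (- g = g); first by right.
  by left; exists (- g); split=> //; apply: qsim_sym.
Qed.

Lemma o_typeE (g : G) : o_type le g <-> ~ g ~ - g \/ g = 0.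
Proof.
split=> [[class1 not2]|[nsim|->]].
- have [sim|] := classic (g ~ - g); last by left.
  right; have opp_g : - g = g by apply/class1/qsim_sym.
  by apply: NNPP => g_neq0; apply: not2; split; [apply/eqP | apply/addrr_eq0_oppr].
- split=> [h|[_ /addrr_eq0_oppr opp_g]]; last by apply: nsim; rewrite opp_g; apply: qsim_refl.
  by split=> [|->]; [apply: not_sim_opp_class | apply: qsim_refl].
- split=> [h|[]]; last by rewrite eqxx.
  by split=> [/sim0_eq0|->]; last by apply: qsim_refl.
Qed.

End CompatibleQuasiOrder.

Theorem mainTheorem4 (G : zmodType) (le : G -> G -> Prop)
  (Hc : compatible_qo le) (g : G) :
  (v_type le g <-> qsim le g (- g)) /\
  (qsim le g (- g) <-> (le 0 g /\ le 0 (- g))) /\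
  (o_type le g <-> (~ qsim le g (- g) \/ g = 0)) /\
  ((~ qsim le g (- g) \/ g = 0) <-> (le g 0 \/ le (- g) 0)).
Proof.
split; first exact: v_typeE.
split; first exact: sim_oppE.
split; first exact: o_typeE.
exact: not_sim_oppE.
Qed.
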